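(* Let $A,\bar A,B,\bar B,C,\bar C$ be six pairwise distinct points in the real projective plane such that no four of them are collinear, and such that the three pairs $\{A,\bar A\},\{B,\bar B\},\{C,\bar C\}$ are not the pairs of opposite vertices of one and the same complete quadrilateral. Apply Schroeter's construction to these three pairs. Then all points obtained by Schroeter's construction (including $A,\bar A,B,\bar B,C,\bar C$) lie on one and the same cubic curve.
   Context: Notation: for distinct points $P,Q$, $PQ$ is the line through them; for distinct lines $l_1,l_2$, $l_1\wedge l_2$ is their intersection point. Schroeter's construction: one starts with the three pairs of points $\{A,\bar A\},\{B,\bar B\},\{C,\bar C\}$. Whenever $\{P,\bar P\}$ and $\{Q,\bar Q\}$ are two (different) pairs already obtained, one forms the new pair $\{S,\bar S\}$ with $S:=PQ\wedge \bar P\bar Q$ and $\bar S:=P\bar Q\wedge \bar PQ$, and adds it to the collection of pairs; this is iterated. The points obtained are all points belonging to pairs produced in this way. *)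

From HB Require Import structures.
From mathcomp Require Import all_boot all_order all_algebra.
From mathcomp Require Import reals.
Set Implicit Arguments. Unset Strict Implicit. Unset Printing Implicit Defensive.
Import Order.TTheory GRing.Theory Num.Theory.
Local Open Scope ring_scope.

(* Homogeneous coordinates: a point (or a line) of P^2(R) is represented by a
   nonzero vector of R^3; two nonzero vectors represent the same point iff
   their cross product vanishes. *)
Definition vec (R : realType) := (R * R * R)%type.

Section Proj.
Variable R : realType.

Definition v0 : vec R := (0, 0, 0).
Definition cross (u v : vec R) : vec R :=
  (u.1.2 * v.2 - u.2 * v.1.2, u.2 * v.1.1 - u.1.1 * v.2, u.1.1 * v.1.2 - u.1.2 * v.1.1).
Definition dot (u v : vec R) : R := u.1.1 * v.1.1 + u.1.2 * v.1.2 + u.2 * v.2.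
Definition det3 (u v w : vec R) : R := dot u (cross v w).

Definition same_pt (u v : vec R) : Prop := cross u v = v0.
Definition join (P Q : vec R) : vec R := cross P Q.
Definition meet (l m : vec R) : vec R := cross l m.

Definition collinear4 (P Q S T : vec R) : Prop :=
  [/\ det3 P Q S = 0, det3 P Q T = 0, det3 P S T = 0 & det3 Q S T = 0].

Definition same_pair (X Y U V : vec R) : Prop :=
  (same_pt X U /\ same_pt Y V) \/ (same_pt X V /\ same_pt Y U).

(* The three pairs {A,Ab},{B,Bb},{C,Cb} are the three pairs of opposite
   vertices of the complete quadrilateral formed by four lines l1..l4 in
   general position (no three concurrent). *)
Definition opp_pair (l1 l2 l3 l4 : vec R) (X Y : vec R) : Prop :=
  [\/ same_pair X Y (meet l1 l2) (meet l3 l4),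
      same_pair X Y (meet l1 l3) (meet l2 l4)
    | same_pair X Y (meet l1 l4) (meet l2 l3)].

Definition opposite_vertices_of_complete_quadrilateral
  (A Ab B Bb C Cb : vec R) : Prop :=
  exists l1 l2 l3 l4 : vec R,
    [/\ det3 l1 l2 l3 <> 0, det3 l1 l2 l4 <> 0, det3 l1 l3 l4 <> 0,
        det3 l2 l3 l4 <> 0 &
        [/\ opp_pair l1 l2 l3 l4 A Ab, opp_pair l1 l2 l3 l4 B Bb
          & opp_pair l1 l2 l3 l4 C Cb]].

(* A new pair
   S := PQ ^ PbQb, Sb := PQb ^ PbQ is formed whenever it is well defined,
   i.e. P<>Q, Pb<>Qb, P<>Qb, Pb<>Q and the two lines in each intersection
   are distinct, which in homogeneous coordinates is exactly S <> 0 and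
   Sb <> 0 (this also forces the two pairs to be different). *)
Inductive schroeter_pair (A Ab B Bb C Cb : vec R) : vec R -> vec R -> Prop :=
| sp_A : schroeter_pair A Ab B Bb C Cb A Ab
| sp_B : schroeter_pair A Ab B Bb C Cb B Bb
| sp_C : schroeter_pair A Ab B Bb C Cb C Cb
| sp_step P Pb Q Qb :
    schroeter_pair A Ab B Bb C Cb P Pb ->
    schroeter_pair A Ab B Bb C Cb Q Qb ->
    meet (join P Q) (join Pb Qb) <> v0 ->
    meet (join P Qb) (join Pb Q) <> v0 ->
    schroeter_pair A Ab B Bb C Cb
      (meet (join P Q) (join Pb Qb)) (meet (join P Qb) (join Pb Q)).

Definition schroeter_point (A Ab B Bb C Cb X : vec R) : Prop :=
  exists Y, schroeter_pair A Ab B Bb C Cb X Y \/ schroeter_pair A Ab B Bb C Cb Y X.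

Definition cubic_eval (c : 'I_4 -> 'I_4 -> R) (X : vec R) : R :=
  \sum_(i < 4) \sum_(j < 4 | (i + j <= 3)%N)
     c i j * X.1.1 ^+ i * X.1.2 ^+ j * X.2 ^+ (3 - i - j).

Definition nonzero_cubic (c : 'I_4 -> 'I_4 -> R) : Prop :=
  exists (i j : 'I_4), (i + j <= 3)%N /\ c i j <> 0.

End Proj.
Arguments v0 {R}.

From HB Require Import structures.
From mathcomp Require Import all_boot all_order all_algebra.
From mathcomp Require Import reals ring lra.
Import Order.TTheory GRing.Theory Num.Theory.
Set Implicit Arguments. Unset Strict Implicit. Unset Printing Implicit Defensive.
Local Open Scope ring_scope.

(* Identify a pair {P, Pb} with the degenerate dual conic l |-> (P . l)(Pb . l).
   Hesse's identity writes the pair produced by a Schroeter step as a linear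
   combination of the two pairs it comes from, so every pair {X, Y} lies in the
   net spanned by the three initial ones.  On the pencil of lines through X the
   form of {X, Y} vanishes, so the three initial forms become linearly dependent
   there; evaluated on three lines of the pencil, this dependence is the
   vanishing of an explicit cubic F at X.  On the line AB, F splits into linear
   factors including [ABC][ABCb]; so if F vanished identically, each join of a
   point of {A, Ab} with a point of {B, Bb} would pass through C or Cb, and
   since no four of the points are collinear this forces the three pairs to be
   the opposite vertices of the quadrilateral formed by these four joins. *)

Section Vectors.
Variable R : realType.
Implicit Types (P Q S U V X Y n l m : vec R).

Definition vadd U V : vec R := (U.1.1 + V.1.1, U.1.2 + V.1.2, U.2 + V.2).
Definition vlin (s : R) X (t : R) Y : vec R :=
  (s * X.1.1 + t * Y.1.1, s * X.1.2 + t * Y.1.2, s * X.2 + t * Y.2).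

Lemma det3_cyc P Q S : det3 P Q S = det3 Q S P.
Proof. rewrite /det3 /dot /cross /=; ring. Qed.

Lemma det3_aba P Q : det3 P Q P = 0.
Proof. rewrite /det3 /dot /cross /=; ring. Qed.

Lemma det3_abb P Q : det3 P Q Q = 0.
Proof. rewrite /det3 /dot /cross /=; ring. Qed.

Lemma dot_cross P Q X : dot X (cross P Q) = det3 P Q X.
Proof. rewrite /det3 /dot /cross /=; ring. Qed.

Lemma dot_self_eq0 X : (dot X X == 0) = (X == v0).
Proof.
case: X => [[x y] z]; rewrite /dot /= -!expr2.
by rewrite !paddr_eq0 ?addr_ge0 ?sqr_ge0 // !sqrf_eq0 !xpair_eqE.
Qed.

Lemma det3_eq0_of_orthogonal n (r1 r2 r3 : vec R) : n <> v0 ->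
  dot n r1 = 0 -> dot n r2 = 0 -> dot n r3 = 0 -> det3 r1 r2 r3 = 0.
Proof.
move=> /eqP; rewrite -dot_self_eq0 => nn h1 h2 h3.
have cramer : det3 r1 r2 r3 * dot n n =
    dot n r1 * det3 n r2 r3 + dot n r2 * det3 r1 n r3 + dot n r3 * det3 r1 r2 n.
  by rewrite /det3 /dot /cross /=; ring.
move/eqP: cramer; rewrite h1 h2 h3 !mul0r !addr0 mulf_eq0 (negPf nn) orbF.
by move/eqP.
Qed.

Lemma collinear4_of_det3 P Q X Y : cross P Q <> v0 ->
  det3 P Q X = 0 -> det3 P Q Y = 0 -> collinear4 P Q X Y.
Proof.
move=> /eqP; rewrite -dot_self_eq0 => nPQ hX hY.
have plueckerP : det3 P X Y * dot (cross P Q) (cross P Q) =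
    det3 P Q Y * det3 P X (cross P Q) - det3 P Q X * det3 P Y (cross P Q).
  by rewrite /det3 /dot /cross /=; ring.
have plueckerQ : det3 Q X Y * dot (cross P Q) (cross P Q) =
    det3 P Q Y * det3 Q X (cross P Q) - det3 P Q X * det3 Q Y (cross P Q).
  by rewrite /det3 /dot /cross /=; ring.
move: plueckerP plueckerQ; rewrite hX hY !mul0r subr0 => /eqP + /eqP.
by rewrite !mulf_eq0 (negPf nPQ) !orbF => /eqP hXY /eqP hQXY.
Qed.

Lemma same_pt_meet X l m : dot X l = 0 -> dot X m = 0 -> same_pt X (meet l m).
Proof.
move=> hl hm; rewrite /same_pt /meet.
have -> : cross X (cross l m) = (l.1.1 * dot X m - m.1.1 * dot X l,
    l.1.2 * dot X m - m.1.2 * dot X l, l.2 * dot X m - m.2 * dot X l).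
  by rewrite /cross /dot /=; congr (_, _, _); ring.
by rewrite hl hm !mulr0 subr0.
Qed.

Lemma v0_of_det3_eq0 X : (forall U V, det3 X U V = 0) -> X = v0.
Proof.
move=> X0; have := X0 (0, 1, 0) (0, 0, 1); have := X0 (0, 0, 1) (1, 0, 0).
have := X0 (1, 0, 0) (0, 1, 0); case: X {X0} => [[x y] z].
rewrite /det3 /dot /cross /=.
by rewrite !(mul0r, mulr0, mul1r, mulr1, subr0, addr0, add0r) => -> -> ->.
Qed.

End Vectors.

Section Net.
Variable R : realType.
Implicit Types (A Ab B Bb C Cb P Pb Q Qb X l : vec R).

Definition pair_form P Pb l : R := dot P l * dot Pb l.

Definition in_net A Ab B Bb C Cb P Pb : Prop :=
  exists a b c : R, forall l, pair_form P Pb l =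
    a * pair_form A Ab l + b * pair_form B Bb l + c * pair_form C Cb l.

Lemma in_net_sym A Ab B Bb C Cb P Pb :
  in_net A Ab B Bb C Cb P Pb -> in_net A Ab B Bb C Cb Pb P.
Proof. by case=> a [b [c net]]; exists a, b, c => l; rewrite -net /pair_form mulrC. Qed.

(* Hesse: if two pairs are conjugate with respect to a conic, so is the pair they produce. *)
Lemma pair_form_schroeter_step P Pb Q Qb l :
  pair_form (meet (join P Q) (join Pb Qb)) (meet (join P Qb) (join Pb Q)) l =
  - (det3 P Q Qb * det3 Pb Q Qb) * pair_form P Pb l
  + det3 Q P Pb * det3 Qb P Pb * pair_form Q Qb l.
Proof. rewrite /pair_form /meet /join /det3 /dot /cross /=; ring. Qed.

Lemma schroeter_pair_in_net A Ab B Bb C Cb P Pb :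
  schroeter_pair A Ab B Bb C Cb P Pb -> in_net A Ab B Bb C Cb P Pb.
Proof.
elim=> {P Pb} [||| P Pb Q Qb _ [a1 [b1 [c1 netP]]] _ [a2 [b2 [c2 netQ]]] _ _].
- by exists 1, 0, 0 => l; ring.
- by exists 0, 1, 0 => l; ring.
- by exists 0, 0, 1 => l; ring.
pose m1 := - (det3 P Q Qb * det3 Pb Q Qb); pose m2 := det3 Q P Pb * det3 Qb P Pb.
exists (m1 * a1 + m2 * a2), (m1 * b1 + m2 * b2), (m1 * c1 + m2 * c2) => l.
by rewrite pair_form_schroeter_step -/m1 -/m2 netP netQ; ring.
Qed.

Lemma schroeter_pair_neq0 A Ab B Bb C Cb P Pb :
  (forall X, X \in [:: A; Ab; B; Bb; C; Cb] -> X <> v0) ->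
  schroeter_pair A Ab B Bb C Cb P Pb -> P <> v0 /\ Pb <> v0.
Proof.
move=> nz; elim=> //; split; apply: nz; by rewrite !inE eqxx ?orbT.
Qed.

End Net.

Section Cubic.
Variable R : realType.
Implicit Types (A Ab B Bb C Cb P X Y U V : vec R).

Definition schroeter_cubic A Ab B Bb C Cb X : R :=
  - det3 A Ab X * det3 B Bb X * det3 C Cb X
  + det3 A Ab X * det3 B C X * det3 Bb Cb X
  + det3 A B X * det3 Ab Bb X * det3 C Cb X
  - det3 A B X * det3 Ab C X * det3 Bb Cb X
  - det3 A Bb X * det3 Ab C X * det3 B Cb X.

Definition pencil_row A Ab B Bb C Cb X U : vec R :=
  (pair_form A Ab (cross X U), pair_form B Bb (cross X U), pair_form C Cb (cross X U)).

(* Where the cubic comes from: it vanishes at X as soon as the three pair forms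
   are linearly dependent on the pencil of lines through X. *)
Lemma det3_pencil_rows A Ab B Bb C Cb X U V :
  det3 (pencil_row A Ab B Bb C Cb X U) (pencil_row A Ab B Bb C Cb X V)
       (pencil_row A Ab B Bb C Cb X (vadd U V)) =
  det3 X U V ^+ 3 * schroeter_cubic A Ab B Bb C Cb X.
Proof. rewrite /pencil_row /pair_form /schroeter_cubic /vadd /det3 /dot /cross /=; ring. Qed.

Lemma pair_form_neq0 X Y : X <> v0 -> Y <> v0 -> exists l, pair_form X Y l != 0.
Proof.
move=> /eqP nX /eqP nY; rewrite -!dot_self_eq0 in nX nY.
have [XY0|nXY] := eqVneq (dot X Y) 0.
  exists (vadd X Y).
  have -> : pair_form X Y (vadd X Y) = (dot X X + dot X Y) * (dot X Y + dot Y Y).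
    by rewrite /pair_form /vadd /dot /=; ring.
  by rewrite XY0 addr0 add0r mulf_neq0.
exists X; have -> : pair_form X Y X = dot X X * dot X Y.
  by rewrite /pair_form /dot /=; ring.
exact: mulf_neq0.
Qed.

Lemma schroeter_cubic_in_net A Ab B Bb C Cb X Y : X <> v0 -> Y <> v0 ->
  in_net A Ab B Bb C Cb X Y -> schroeter_cubic A Ab B Bb C Cb X = 0.
Proof.
move=> nX nY [a [b [c net]]].
have nabc : (a, b, c) <> v0.
  case=> a0 b0 c0; have [l] := pair_form_neq0 nX nY.
  by rewrite net a0 b0 c0 !mul0r !addr0 eqxx.
have row0 W : dot (a, b, c) (pencil_row A Ab B Bb C Cb X W) = 0.
  rewrite /dot /pencil_row /= -net /pair_form dot_cross det3_aba.
  exact: mul0r.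
have cube0 U V : det3 X U V ^+ 3 * schroeter_cubic A Ab B Bb C Cb X = 0.
  by rewrite -det3_pencil_rows; apply: (det3_eq0_of_orthogonal nabc).
have [->//|nF] := eqVneq (schroeter_cubic A Ab B Bb C Cb X) 0.
case: nX; apply: v0_of_det3_eq0 => U V.
by move/eqP: (cube0 U V); rewrite mulf_eq0 expf_eq0 (negPf nF) orbF => /eqP.
Qed.

Lemma schroeter_cubic_schroeter_point A Ab B Bb C Cb X :
  (forall P, P \in [:: A; Ab; B; Bb; C; Cb] -> P <> v0) ->
  schroeter_point A Ab B Bb C Cb X -> schroeter_cubic A Ab B Bb C Cb X = 0.
Proof.
move=> nz [Y [XY|YX]].
  have [nX nY] := schroeter_pair_neq0 nz XY.
  exact: schroeter_cubic_in_net nX nY (schroeter_pair_in_net XY).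
have [nY nX] := schroeter_pair_neq0 nz YX.
exact: schroeter_cubic_in_net nX nY (in_net_sym (schroeter_pair_in_net YX)).
Qed.

Lemma cubic_evalE (f : nat -> nat -> R) X :
  cubic_eval (fun i j : 'I_4 => f i j) X =
  f 0 0 * X.2 ^+ 3 + f 0 1 * X.1.2 * X.2 ^+ 2 + f 0 2 * X.1.2 ^+ 2 * X.2
  + f 0 3 * X.1.2 ^+ 3
  + f 1 0 * X.1.1 * X.2 ^+ 2 + f 1 1 * X.1.1 * X.1.2 * X.2
  + f 1 2 * X.1.1 * X.1.2 ^+ 2
  + f 2 0 * X.1.1 ^+ 2 * X.2 + f 2 1 * X.1.1 ^+ 2 * X.1.2
  + f 3 0 * X.1.1 ^+ 3.
Proof.
rewrite /cubic_eval; under eq_bigr do rewrite big_mkcond.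
by rewrite /= !big_ord_recr /= !big_ord0 /=; ring.
Qed.

(* Entry (i, j) is the coefficient of x^i y^j z^(3-i-j) in (u . X)(v . X)(w . X). *)
Definition prod3_coef (u v w : vec R) (i j : nat) : R :=
  let: (u1, u2, u3) := u in let: (v1, v2, v3) := v in let: (w1, w2, w3) := w in
  match i, j with
  | 3, 0 => u1 * v1 * w1
  | 0, 3 => u2 * v2 * w2
  | 0, 0 => u3 * v3 * w3
  | 2, 1 => u1 * v1 * w2 + u1 * v2 * w1 + u2 * v1 * w1
  | 2, 0 => u1 * v1 * w3 + u1 * v3 * w1 + u3 * v1 * w1
  | 1, 2 => u1 * v2 * w2 + u2 * v1 * w2 + u2 * v2 * w1
  | 0, 2 => u2 * v2 * w3 + u2 * v3 * w2 + u3 * v2 * w2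
  | 1, 0 => u1 * v3 * w3 + u3 * v1 * w3 + u3 * v3 * w1
  | 0, 1 => u2 * v3 * w3 + u3 * v2 * w3 + u3 * v3 * w2
  | 1, 1 => u1 * v2 * w3 + u1 * v3 * w2 + u2 * v1 * w3 + u2 * v3 * w1
            + u3 * v1 * w2 + u3 * v2 * w1
  | _, _ => 0
  end.

Definition schroeter_coef A Ab B Bb C Cb (i j : nat) : R :=
  - prod3_coef (cross A Ab) (cross B Bb) (cross C Cb) i j
  + prod3_coef (cross A Ab) (cross B C) (cross Bb Cb) i j
  + prod3_coef (cross A B) (cross Ab Bb) (cross C Cb) i j
  - prod3_coef (cross A B) (cross Ab C) (cross Bb Cb) i j
  - prod3_coef (cross A Bb) (cross Ab C) (cross B Cb) i j.

Lemma cubic_eval_schroeter_coef A Ab B Bb C Cb X :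
  cubic_eval (fun i j : 'I_4 => schroeter_coef A Ab B Bb C Cb i j) X =
  schroeter_cubic A Ab B Bb C Cb X.
Proof.
rewrite cubic_evalE /schroeter_cubic /schroeter_coef -!dot_cross /dot /cross /=; ring.
Qed.

Lemma nonzero_cubic_or_eval0 (c : 'I_4 -> 'I_4 -> R) :
  nonzero_cubic c \/ forall X, cubic_eval c X = 0.
Proof.
case: (pickP (fun ij : 'I_4 * 'I_4 => (ij.1 + ij.2 <= 3)%N && (c ij.1 ij.2 != 0))).
  by case=> i j /andP[ij /eqP cij]; left; exists i, j.
move=> c0; right=> X; rewrite /cubic_eval big1 // => i _; rewrite big1 // => j ij.
by move/negbT: (c0 (i, j)); rewrite /= ij negbK => /eqP->; rewrite !mul0r.
Qed.

End Cubic.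

Section Nondegeneracy.
Variable R : realType.
Implicit Types (A Ab B Bb C Cb X Xp Y Yp : vec R).

Lemma schroeter_cubic_swapA A Ab B Bb C Cb X :
  schroeter_cubic A Ab B Bb C Cb X = schroeter_cubic Ab A B Bb C Cb X.
Proof. rewrite /schroeter_cubic /det3 /dot /cross /=; ring. Qed.

Lemma schroeter_cubic_swapB A Ab B Bb C Cb X :
  schroeter_cubic A Ab B Bb C Cb X = schroeter_cubic A Ab Bb B C Cb X.
Proof. rewrite /schroeter_cubic /det3 /dot /cross /=; ring. Qed.

Lemma schroeter_cubic_on_join X Xp Y Yp C Cb (s t : R) :
  schroeter_cubic X Xp Y Yp C Cb (vlin s X t Y) =
  s * t * (s * det3 X Xp Yp + t * det3 Y Xp Yp) * (det3 X Y C * det3 X Y Cb).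
Proof. rewrite /schroeter_cubic /vlin /det3 /dot /cross /=; ring. Qed.

Lemma schroeter_cubic_eq0_join X Xp Y Yp C Cb :
  (forall Z, schroeter_cubic X Xp Y Yp C Cb Z = 0) ->
  (det3 Xp Yp X = 0 /\ det3 Xp Yp Y = 0) \/ det3 X Y C = 0 \/ det3 X Y Cb = 0.
Proof.
move=> F0; have [/eqP|nCCb] := eqVneq (det3 X Y C * det3 X Y Cb) 0.
  by rewrite mulf_eq0 => /orP[] /eqP; right; [left|right].
have line0 s t : s * t * (s * det3 X Xp Yp + t * det3 Y Xp Yp) = 0.
  by move/eqP: (F0 (vlin s X t Y)); rewrite schroeter_cubic_on_join mulf_eq0 (negPf nCCb) orbF => /eqP.
have := line0 1 1; have := line0 1 (-1); rewrite (det3_cyc X) (det3_cyc Y).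
by left; split; lra.
Qed.

Lemma opposite_vertices_of_incidences A Ab B Bb C Cb :
  det3 A B Bb <> 0 -> det3 A B Ab <> 0 -> det3 A Bb Ab <> 0 -> det3 Ab B Bb <> 0 ->
  [/\ det3 A B C = 0, det3 Ab Bb C = 0, det3 A Bb Cb = 0 & det3 Ab B Cb = 0] \/
  [/\ det3 A Bb C = 0, det3 Ab B C = 0, det3 A B Cb = 0 & det3 Ab Bb Cb = 0] ->
  opposite_vertices_of_complete_quadrilateral A Ab B Bb C Cb.
Proof.
move=> /eqP nABBb /eqP nABAb /eqP nABbAb /eqP nAbBBb incid.
exists (cross A B), (cross A Bb), (cross Ab B), (cross Ab Bb); split.
- have -> : det3 (cross A B) (cross A Bb) (cross Ab B) = - (det3 A B Bb * det3 A B Ab).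
    by rewrite /det3 /dot /cross /=; ring.
  by apply/eqP; rewrite oppr_eq0 mulf_neq0.
- have -> : det3 (cross A B) (cross A Bb) (cross Ab Bb) = - (det3 A Bb Ab * det3 A B Bb).
    by rewrite /det3 /dot /cross /=; ring.
  by apply/eqP; rewrite oppr_eq0 mulf_neq0.
- have -> : det3 (cross A B) (cross Ab B) (cross Ab Bb) = det3 Ab B Bb * det3 A B Ab.
    by rewrite /det3 /dot /cross /=; ring.
  by apply/eqP; rewrite mulf_neq0.
- have -> : det3 (cross A Bb) (cross Ab B) (cross Ab Bb) = det3 Ab B Bb * det3 A Bb Ab.
    by rewrite /det3 /dot /cross /=; ring.
  by apply/eqP; rewrite mulf_neq0.
split.
- by apply: Or31; left; split; apply: same_pt_meet; rewrite dot_cross ?det3_aba.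
- by apply: Or32; left; split; apply: same_pt_meet; rewrite dot_cross ?det3_abb.
- apply: Or33; case: incid => -[h1 h2 h3 h4]; [left|right];
    by split; apply: same_pt_meet; rewrite dot_cross.
Qed.

Section GeneralPosition.
Variables A Ab B Bb C Cb : vec R.
Local Notation pt i := (nth v0 [:: A; Ab; B; Bb; C; Cb] i).
Hypothesis pts_distinct : forall i j : 'I_6, i <> j -> ~ same_pt (pt i) (pt j).
Hypothesis pts_no4 : forall i j k l : 'I_6, uniq [:: i; j; k; l] ->
  ~ collinear4 (pt i) (pt j) (pt k) (pt l).

Lemma not_two_on_line (i j k l : 'I_6) : uniq [:: i; j; k; l] ->
  det3 (pt i) (pt j) (pt k) = 0 -> det3 (pt i) (pt j) (pt l) = 0 -> False.
Proof.
move=> ijkl hk hl; apply: (pts_no4 ijkl); apply: collinear4_of_det3 hk hl.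
by apply: pts_distinct => ij; move: ijkl; rewrite ij /= inE eqxx.
Qed.

Lemma third_point_off_join (i j k : 'I_6) :
  uniq [:: i; j; k; 4] -> uniq [:: i; j; k; 5] ->
  det3 (pt i) (pt j) C = 0 \/ det3 (pt i) (pt j) Cb = 0 -> det3 (pt i) (pt j) (pt k) <> 0.
Proof. by move=> u4 u5 [] hX hk; [apply: (not_two_on_line u4) | apply: (not_two_on_line u5)]. Qed.

Lemma join_meets_third_pair (i ib j jb : 'I_6) : uniq [:: ib; jb; i; j] ->
  (forall X, schroeter_cubic (pt i) (pt ib) (pt j) (pt jb) C Cb X = 0) ->
  det3 (pt i) (pt j) C = 0 \/ det3 (pt i) (pt j) Cb = 0.
Proof.
move=> u F0; case: (schroeter_cubic_eq0_join F0) => // -[hi hj].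
by case: (not_two_on_line u hi hj).
Qed.

Lemma opposite_vertices_of_schroeter_cubic_eq0 :
  (forall X, schroeter_cubic A Ab B Bb C Cb X = 0) ->
  opposite_vertices_of_complete_quadrilateral A Ab B Bb C Cb.
Proof.
move=> F0.
have F1 X : schroeter_cubic Ab A B Bb C Cb X = 0 by rewrite -schroeter_cubic_swapA.
have F2 X : schroeter_cubic A Ab Bb B C Cb X = 0 by rewrite -schroeter_cubic_swapB.
have F12 X : schroeter_cubic Ab A Bb B C Cb X = 0.
  by rewrite -schroeter_cubic_swapA -schroeter_cubic_swapB.
have hAB := join_meets_third_pair (i:=0) (ib:=1) (j:=2) (jb:=3) isT F0.
have hABb := join_meets_third_pair (i:=0) (ib:=1) (j:=3) (jb:=2) isT F2.
have hAbB := join_meets_third_pair (i:=1) (ib:=0) (j:=2) (jb:=3) isT F1.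
have hAbBb := join_meets_third_pair (i:=1) (ib:=0) (j:=3) (jb:=2) isT F12.
apply: opposite_vertices_of_incidences.
- exact: (third_point_off_join (i:=0) (j:=2) (k:=3) isT isT hAB).
- exact: (third_point_off_join (i:=0) (j:=2) (k:=1) isT isT hAB).
- exact: (third_point_off_join (i:=0) (j:=3) (k:=1) isT isT hABb).
- exact: (third_point_off_join (i:=1) (j:=2) (k:=3) isT isT hAbB).
(* Joins sharing a point of {A, Ab} or of {B, Bb} cannot pass through the same
   point of {C, Cb}. *)
case: hAB => hABC; [left | right].
- have hABbCb : det3 A Bb Cb = 0.
    case: hABb => // hABbC; exfalso.
    by apply: (not_two_on_line (i:=4) (j:=0) (k:=2) (l:=3) isT); rewrite det3_cyc.
  have hAbBCb : det3 Ab B Cb = 0.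
    case: hAbB => // hAbBC; exfalso.
    by apply: (not_two_on_line (i:=2) (j:=4) (k:=0) (l:=1) isT); rewrite -det3_cyc.
  have hAbBbC : det3 Ab Bb C = 0.
    case: hAbBb => // hAbBbCb; exfalso.
    by apply: (not_two_on_line (i:=3) (j:=5) (k:=0) (l:=1) isT); rewrite -det3_cyc.
  by split.
- have hABbC : det3 A Bb C = 0.
    case: hABb => // hABbCb; exfalso.
    by apply: (not_two_on_line (i:=5) (j:=0) (k:=2) (l:=3) isT); rewrite det3_cyc.
  have hAbBC : det3 Ab B C = 0.
    case: hAbB => // hAbBCb; exfalso.
    by apply: (not_two_on_line (i:=2) (j:=5) (k:=0) (l:=1) isT); rewrite -det3_cyc.
  have hAbBbCb : det3 Ab Bb Cb = 0.
    case: hAbBb => // hAbBbC; exfalso.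
    by apply: (not_two_on_line (i:=3) (j:=4) (k:=0) (l:=1) isT); rewrite -det3_cyc.
  by split.
Qed.

End GeneralPosition.
End Nondegeneracy.

Theorem theorem5 (R : realType) (A Ab B Bb C Cb : vec R) :
  (forall X, X \in [:: A; Ab; B; Bb; C; Cb] -> X <> v0) ->
  (forall i j : 'I_6, i <> j ->
     ~ same_pt (nth v0 [:: A; Ab; B; Bb; C; Cb] i)
               (nth v0 [:: A; Ab; B; Bb; C; Cb] j)) ->
  (forall i j k l : 'I_6, uniq [:: i; j; k; l] ->
     ~ collinear4 (nth v0 [:: A; Ab; B; Bb; C; Cb] i)
                  (nth v0 [:: A; Ab; B; Bb; C; Cb] j)
                  (nth v0 [:: A; Ab; B; Bb; C; Cb] k)
                  (nth v0 [:: A; Ab; B; Bb; C; Cb] l)) ->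
  ~ opposite_vertices_of_complete_quadrilateral A Ab B Bb C Cb ->
  exists c : 'I_4 -> 'I_4 -> R,
    nonzero_cubic c /\
    forall X, schroeter_point A Ab B Bb C Cb X -> cubic_eval c X = 0.
Proof.
move=> nz distinct no4 not_quad.
pose c (i j : 'I_4) := schroeter_coef A Ab B Bb C Cb i j.
exists c; split; last first.
  by move=> X hX; rewrite cubic_eval_schroeter_coef schroeter_cubic_schroeter_point.
have [//|c0] := nonzero_cubic_or_eval0 c.
case: not_quad; apply: opposite_vertices_of_schroeter_cubic_eq0 => // X.
by rewrite -cubic_eval_schroeter_coef c0.
Qed.
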